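(* Consider the amplicon branching process with stutter with parameters $p,\xi\in[0,1]$, started from a single target amplicon and no stutter amplicons, and let $T$ and $S$ be the numbers of target and stutter amplicons after $n\ge 0$ cycles. Write $q=p(1-\xi)$. Then $$\mathbb{E}[T]=(1+q)^n,\qquad \mathbb{E}[S]=(1+p)^n-(1+q)^n,$$ $$\operatorname{Var}(T)=\frac{1-q}{1+q}\,(1+q)^n\big[(1+q)^n-1\big],$$ $$\mathbb{E}[TS]=(1+q)^{n-1}\Big(\xi\big[1-(1+p)^n\big]+2\big[(1+p)^n-(1+q)^n\big]\Big),$$ and $$\operatorname{Cov}(T,S)=(1+q)^{n-1}\Big[(1-q)\big((1+p)^n-(1+q)^n\big)-\xi\big((1+p)^n-1\big)\Big].$$
   Context: The amplicon branching process with stutter (a model of PCR) is the two-type discrete-time branching process defined as follows. There are two types of particles, target amplicons and stutter amplicons, and all particles persist forever. In each cycle, independently of everything else, each existing target amplicon produces one new target amplicon with probability $p(1-\xi)$, produces one new stutter amplicon with probability $p\xi$, and produces nothing with probability $1-p$; each existing stutter amplicon produces one new stutter amplicon with probability $p$ and nothing with probability $1-p$. Equivalently, the joint probability generating function $F_n(t,s)=\mathbb{E}[t^{T}s^{S}]$ after $n$ cycles satisfies $F_0(t,s)=t$, $G_0(s)=s$, $F_n=(1-p)F_{n-1}+p(1-\xi)F_{n-1}^2+p\xi F_{n-1}G_{n-1}$, $G_n=(1-p)G_{n-1}+pG_{n-1}^2$. *)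

From mathcomp Require Import all_boot all_order all_algebra.
Set Implicit Arguments. Unset Strict Implicit. Unset Printing Implicit Defensive.
Import Order.TTheory GRing.Theory Num.Theory.
Local Open Scope ring_scope.

(* The amplicon branching process with stutter, as a Markov chain on the
   state (T, S) = (#target amplicons, #stutter amplicons).

   One-cycle transition kernel: from state (t, s), the probability that
   a new targets and b new stutters are produced.  Each of the t targets
   independently produces a target (prob. q = p(1-xi)), a stutter (prob.
   p xi) or nothing (prob. 1-p); each of the s stutters independently
   produces a stutter (prob. p) or nothing (prob. 1-p).  Summing over the
   number i of stutters produced by targets (multinomial for the targets,
   binomial for the stutters): *)
Definition amp_kernel (R : nzRingType) (p xi : R) (t s a b : nat) : R :=
  \sum_(i < b.+1)
    (('C(t, a) * 'C(t - a, i))%:R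
       * (p * (1 - xi)) ^+ a * (p * xi) ^+ i * (1 - p) ^+ (t - a - i)
     * ('C(s, b - i)%:R * p ^+ (b - i) * (1 - p) ^+ (s - (b - i)))).

(* Joint law of (T, S) after n cycles, started from (1, 0):
   amp_dist p xi n t s = P(T = t, S = s).  Since the total number of
   amplicons at most doubles each cycle, after m cycles T, S <= 2^m, so
   summing over t, s <= 2^m covers the whole support. *)
Fixpoint amp_dist (R : nzRingType) (p xi : R) (n : nat) : nat -> nat -> R :=
  match n with
  | 0 => fun t s => ((t == 1%N) && (s == 0%N))%:R
  | m.+1 => fun t' s' =>
      \sum_(t < (2 ^ m).+1) \sum_(s < (2 ^ m).+1)
        amp_dist p xi m t s *
        (if (t <= t')%N && (s <= s')%N
         then amp_kernel p xi t s (t' - t) (s' - s) else 0)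
  end.

Definition amp_E (R : nzRingType) (p xi : R) (n : nat) (f : nat -> nat -> R) : R :=
  \sum_(t < (2 ^ n).+1) \sum_(s < (2 ^ n).+1) amp_dist p xi n t s * f t s.

Definition amp_ET (R : nzRingType) (p xi : R) n := amp_E p xi n (fun t _ => t%:R).
Definition amp_ES (R : nzRingType) (p xi : R) n := amp_E p xi n (fun _ s => s%:R).
Definition amp_ETS (R : nzRingType) (p xi : R) n :=
  amp_E p xi n (fun t s => t%:R * s%:R).
Definition amp_VarT (R : nzRingType) (p xi : R) n :=
  amp_E p xi n (fun t _ => t%:R ^+ 2) - amp_ET p xi n ^+ 2.
Definition amp_CovTS (R : nzRingType) (p xi : R) n :=
  amp_ETS p xi n - amp_ET p xi n * amp_ES p xi n.

(* One cycle takes a state (t, s) to (t + a, s + i + j), where (a, i) is trinomial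
   with t trials and cell probabilities (q, p xi, 1 - p), and j is an independent
   binomial(s, p).  Hence the one-cycle conditional expectation of a polynomial of
   degree two in (T, S) is again such a polynomial in (t, s), so E[T], E[S], E[T^2]
   and E[TS] obey a closed system of linear recurrences, e.g.
   E[T^2]_(n+1) = (1 + q)^2 E[T^2]_n + q (1 - q) E[T]_n, solved from the state (1, 0). *)

From mathcomp Require Import all_boot all_order all_algebra.
From mathcomp Require Import ring zify.
Set Implicit Arguments. Unset Strict Implicit. Unset Printing Implicit Defensive.
Import Order.TTheory GRing.Theory Num.Theory.
Local Open Scope ring_scope.

Section BinomialSums.
Variable R : comPzSemiRingType.
Implicit Types (x y : R) (F : nat -> R).

Definition binw x y m k : R := 'C(m, k)%:R * (x ^+ k * y ^+ (m - k)).

Lemma binw_small x y m k : (m < k)%N -> binw x y m k = 0.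
Proof. by move=> lt_mk; rewrite /binw bin_small ?mul0r. Qed.

Lemma sum_binw x y m : \sum_(k < m.+1) binw x y m k = (x + y) ^+ m.
Proof.
by rewrite addrC exprDn; apply: eq_bigr => k _; rewrite /binw -mulr_natl; ring.
Qed.

Lemma sum_mul_bin_diag F m :
  \sum_(k < m.+1) k%:R * ('C(m, k)%:R * F k) =
  m%:R * \sum_(k < m) 'C(m.-1, k)%:R * F k.+1.
Proof.
rewrite big_ord_recl mul0r add0r mulr_sumr; apply: eq_bigr => k _.
by rewrite mulrA -natrM -mul_bin_diag natrM mulrA.
Qed.

Lemma sum_binw_mulk x y m :
  \sum_(k < m.+1) k%:R * binw x y m k = m%:R * x * (x + y) ^+ m.-1.
Proof.
rewrite (sum_mul_bin_diag (fun k => x ^+ k * y ^+ (m - k))).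
case: m => [|m]; first by rewrite big_ord0 !mul0r.
rewrite -sum_binw -mulrA [x * _]mulr_sumr; congr (_ * _); apply: eq_bigr => k _.
by rewrite /binw subSS exprS; ring.
Qed.

(* The truncated predecessors m.-1 and m.-2 only matter where a factor m or m.-1
   of the same term vanishes. *)
Lemma sum_binw_mulk2 x y m :
  \sum_(k < m.+1) k%:R ^+ 2 * binw x y m k =
  m%:R * x * ((m.-1)%:R * x * (x + y) ^+ m.-2 + (x + y) ^+ m.-1).
Proof.
rewrite (eq_bigr (fun k : 'I_m.+1 =>
  k%:R * ('C(m, k)%:R * (k%:R * (x ^+ k * y ^+ (m - k)))))); last first.
  by move=> k _; rewrite /binw; ring.
rewrite (sum_mul_bin_diag (fun k => k%:R * (x ^+ k * y ^+ (m - k)))).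
case: m => [|m]; first by rewrite big_ord0 !mul0r.
rewrite -sum_binw_mulk -sum_binw -big_split -mulrA [x * _]mulr_sumr.
congr (_ * _); apply: eq_bigr => k _.
by rewrite /binw /= subSS exprS; ring.
Qed.

Lemma sum_binw_poly2 x y m c0 c1 c2 : x + y = 1 ->
  \sum_(k < m.+1) binw x y m k * (c0 + c1 * k%:R + c2 * k%:R ^+ 2) =
  c0 + c1 * (m%:R * x) + c2 * (m%:R * x * ((m.-1)%:R * x + 1)).
Proof.
move=> xy1; rewrite (eq_bigr (fun k : 'I_m.+1 =>
  c0 * binw x y m k + c1 * (k%:R * binw x y m k) + c2 * (k%:R ^+ 2 * binw x y m k))).
  rewrite !big_split -!mulr_sumr /= sum_binw sum_binw_mulk sum_binw_mulk2 xy1.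
  by rewrite !expr1n; ring.
by move=> k _; ring.
Qed.

Lemma sum_binw_subn x y m F :
  \sum_(k < m.+1) (m - k)%:R * ('C(m, k)%:R * (x ^+ k * y ^+ (m - k).-1)) * F k =
  m%:R * \sum_(k < m) binw x y m.-1 k * F k.
Proof.
rewrite big_ord_recr /= subnn !mul0r addr0 mulr_sumr; apply: eq_bigr => k _.
by rewrite /binw mulrA -natrM -mul_bin_down natrM predn_sub !mulrA.
Qed.
End BinomialSums.

Section IndexRanges.
Variable R : nmodType.
Implicit Types F : nat -> R.

Lemma sum_ord_trunc m N F : (m <= N)%N -> (forall i, (m <= i)%N -> F i = 0) ->
  \sum_(i < N) F i = \sum_(i < m) F i.
Proof.
move=> le_mN F0; rewrite (big_ord_widen _ _ le_mN) [RHS]big_mkcond.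
by apply: eq_bigr => i _; case: ltnP => // /F0.
Qed.

Lemma sum_ord_shift t N F : (t <= N)%N ->
  \sum_(i < N) (if (t <= i)%N then F (i - t)%N else 0) = \sum_(a < N - t) F a.
Proof.
move=> le_tN; have -> : N = (t + (N - t))%N by rewrite subnKC.
rewrite addKn big_split_ord /=.
rewrite big1 ?add0r; last by move=> i _; rewrite leqNgt ltn_ord.
by apply: eq_bigr => i _; rewrite leq_addr addKn.
Qed.

Lemma sum_ord_antidiagonal (F : nat -> nat -> R) B :
  \sum_(b < B) \sum_(i < b.+1) F i (b - i)%N =
  \sum_(i < B) \sum_(j < B - i) F i j.
Proof.
transitivity (\sum_(b < B) \sum_(i < B) if (i <= b)%N then F i (b - i)%N else 0).
  apply: eq_bigr => b _.
  by rewrite (big_ord_widen _ (fun i => F i (b - i)%N) (ltn_ord b)) big_mkcond.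
by rewrite exchange_big; apply: eq_bigr => i _; rewrite -sum_ord_shift // ltnW.
Qed.
End IndexRanges.

Section OneCycle.
Variables (R : comNzRingType) (p xi : R).
Local Notation q := (p * (1 - xi)).
Local Notation r := (p * xi).
Local Notation u := (1 - p).

Definition target_weight t a i : R := 'C(t, a)%:R * q ^+ a * binw r u (t - a) i.

Lemma amp_kernelE t s a b : amp_kernel p xi t s a b =
  \sum_(i < b.+1) target_weight t a i * binw p u s (b - i).
Proof. by apply: eq_bigr => i _; rewrite /target_weight /binw natrM; ring. Qed.

Lemma target_weight0 t a i : (t < a + i)%N -> target_weight t a i = 0.
Proof.
move=> lt_t_ai; rewrite /target_weight; case: (leqP a t) => [le_at|lt_ta].
  by rewrite binw_small ?mulr0 //; lia.
by rewrite bin_small ?mul0r.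
Qed.

Lemma sum_target_weight_lin t a c0 c1 :
  \sum_(i < t.+1) target_weight t a i * (c0 + c1 * i%:R) =
  'C(t, a)%:R * q ^+ a *
    (c0 * (1 - q) ^+ (t - a) + c1 * ((t - a)%:R * r * (1 - q) ^+ (t - a).-1)).
Proof.
have ru : r + u = 1 - q by ring.
rewrite (sum_ord_trunc (m := (t - a).+1)
  (F := fun i => target_weight t a i * (c0 + c1 * i%:R))); first last.
- by move=> i lt_ta_i; rewrite target_weight0 ?mul0r //; lia.
- by rewrite ltnS leq_subr.
rewrite (eq_bigr (fun i : 'I_(t - a).+1 => 'C(t, a)%:R * q ^+ a *
  (c0 * binw r u (t - a) i + c1 * (i%:R * binw r u (t - a) i)))).
  by rewrite -mulr_sumr big_split -!mulr_sumr /= sum_binw sum_binw_mulk ru; ring.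
by move=> i _; rewrite /target_weight; ring.
Qed.

Lemma target_moments t c0 c1 c2 c3 c4 :
  \sum_(a < t.+1) \sum_(i < t.+1) target_weight t a i *
     (c0 + c1 * a%:R + c2 * i%:R + c3 * a%:R ^+ 2 + c4 * a%:R * i%:R) =
  c0 + c1 * (t%:R * q) + c2 * (t%:R * r) + c3 * (t%:R * q * ((t.-1)%:R * q + 1))
     + c4 * (t%:R * (t.-1)%:R * q * r).
Proof.
have q1 : q + (1 - q) = 1 by ring.
rewrite (eq_bigr (fun a : 'I_t.+1 =>
    binw q (1 - q) t a * (c0 + c1 * a%:R + c3 * a%:R ^+ 2)
  + r * ((t - a)%:R * ('C(t, a)%:R * (q ^+ a * (1 - q) ^+ (t - a).-1))
         * (c2 + c4 * a%:R)))); last first.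
  move=> a _; rewrite (eq_bigr (fun i : 'I_t.+1 => target_weight t a i *
    ((c0 + c1 * a%:R + c3 * a%:R ^+ 2) + (c2 + c4 * a%:R) * i%:R))).
    by rewrite sum_target_weight_lin /binw; ring.
  by move=> i _; congr (_ * _); ring.
rewrite big_split /= sum_binw_poly2 // -mulr_sumr.
rewrite (sum_binw_subn _ _ _ (fun a => c2 + c4 * a%:R)).
case: t => [|t]; first by rewrite big_ord0 !mul0r; ring.
rewrite (eq_bigr (fun a : 'I_t.+1 =>
  binw q (1 - q) t a * (c2 + c4 * a%:R + 0 * a%:R ^+ 2))).
  by rewrite sum_binw_poly2 //=; ring.
by move=> a _; ring.
Qed.

Lemma stutter_moments s c0 c1 :
  \sum_(j < s.+1) binw p u s j * (c0 + c1 * j%:R) = c0 + c1 * (s%:R * p).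
Proof.
rewrite (eq_bigr (fun j : 'I_s.+1 => binw p u s j * (c0 + c1 * j%:R + 0 * j%:R ^+ 2))).
  by rewrite sum_binw_poly2 ?subrKC //; ring.
by move=> j _; ring.
Qed.

Definition cycle_E t s (f : nat -> nat -> R) : R :=
  \sum_(a < t.+1) \sum_(i < t.+1) \sum_(j < s.+1)
    target_weight t a i * binw p u s j * f (t + a)%N (s + (i + j))%N.

Lemma cycle_E_quadratic t s f c0 c1 c2 c3 c4 c5 c6 :
  (forall a i j, f (t + a)%N (s + (i + j))%N =
     c0 + c1 * a%:R + c2 * i%:R + c3 * a%:R ^+ 2 + c4 * a%:R * i%:R
     + (c5 + c6 * a%:R) * j%:R) ->
  cycle_E t s f =
  c0 + c5 * (s%:R * p) + (c1 + c6 * (s%:R * p)) * (t%:R * q) + c2 * (t%:R * r)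
  + c3 * (t%:R * q * ((t.-1)%:R * q + 1)) + c4 * (t%:R * (t.-1)%:R * q * r).
Proof.
move=> fE; rewrite /cycle_E -target_moments; apply: eq_bigr => a _.
apply: eq_bigr => i _.
under eq_bigr do rewrite fE -mulrA.
by rewrite -mulr_sumr stutter_moments; congr (_ * _); ring.
Qed.

Lemma cycle_E_T t s : cycle_E t s (fun t' _ => t'%:R) = (1 + q) * t%:R.
Proof.
rewrite (@cycle_E_quadratic _ _ _ t%:R 1 0 0 0 0 0); first by ring.
by move=> a i j; rewrite natrD; ring.
Qed.

Lemma cycle_E_S t s : cycle_E t s (fun _ s' => s'%:R) = (1 + p) * s%:R + r * t%:R.
Proof.
rewrite (@cycle_E_quadratic _ _ _ s%:R 0 1 0 0 1 0); first by ring.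
by move=> a i j; rewrite !natrD; ring.
Qed.

Lemma cycle_E_T2 t s : cycle_E t s (fun t' _ => t'%:R ^+ 2) =
  (1 + q) ^+ 2 * t%:R ^+ 2 + q * (1 - q) * t%:R.
Proof.
rewrite (@cycle_E_quadratic _ _ _ (t%:R ^+ 2) (2 * t%:R) 0 1 0 0 0).
  by case: t => [|t] /=; ring.
by move=> a i j; rewrite !natrD; ring.
Qed.

Lemma cycle_E_TS t s : cycle_E t s (fun t' s' => t'%:R * s'%:R) =
  (1 + p) * (1 + q) * (t%:R * s%:R) + r * (1 + q) * t%:R ^+ 2 - q * r * t%:R.
Proof.
rewrite (@cycle_E_quadratic _ _ _ (t%:R * s%:R) s%:R t%:R 0 1 t%:R 1).
  by case: t => [|t] /=; ring.
by move=> a i j; rewrite !natrD; ring.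
Qed.
End OneCycle.

Section Chain.
Variables (R : comNzRingType) (p xi : R).
Local Notation u := (1 - p).

Lemma amp_kernel0 t s a b : (t + s < a + b)%N -> amp_kernel p xi t s a b = 0.
Proof.
move=> lt_ts_ab; rewrite amp_kernelE big1 // => i _.
have le_ib : (i <= b)%N by rewrite -ltnS.
case: (ltnP t (a + i)) => [lt_t_ai|le_ai_t]; first by rewrite target_weight0 ?mul0r.
by rewrite binw_small ?mulr0 //; lia.
Qed.

Lemma amp_dist0 m t s : (2 ^ m < t + s)%N -> amp_dist p xi m t s = 0.
Proof.
elim: m t s => [|m IHm] t s /=.
  by case: t => [|[|t]] //; case: s.
move=> lt_2m_ts; rewrite big1 // => t0 _; rewrite big1 // => s0 _.
case: (leqP (t0 + s0) (2 ^ m)) => [le_ts0|/IHm->]; last by rewrite mul0r.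
case: ifP => [/andP [le_tt0 le_ss0]|_]; last by rewrite mulr0.
by rewrite amp_kernel0 ?mulr0 //; move: lt_2m_ts; rewrite expnS; lia.
Qed.

Lemma sum_amp_kernel t s a B (g : nat -> R) : (t + s < B)%N ->
  \sum_(b < B) amp_kernel p xi t s a b * g b =
  \sum_(i < t.+1) \sum_(j < s.+1) target_weight p xi t a i * binw p u s j * g (i + j)%N.
Proof.
move=> lt_ts_B.
pose G i j := target_weight p xi t a i * binw p u s j * g (i + j)%N.
rewrite (eq_bigr (fun b : 'I_B => \sum_(i < b.+1) G i (b - i)%N)); last first.
  move=> b _; rewrite amp_kernelE mulr_suml; apply: eq_bigr => i _.
  by rewrite /G subnKC // -ltnS.
rewrite (sum_ord_antidiagonal G).
rewrite (sum_ord_trunc (m := t.+1) (F := fun i => \sum_(j < B - i) G i j)); first last.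
- by move=> i lt_t_i; rewrite big1 // => j _; rewrite /G target_weight0 ?mul0r //; lia.
- by lia.
apply: eq_bigr => i _; rewrite (sum_ord_trunc (m := s.+1) (F := G i)) //.
- by have := ltn_ord i; lia.
- by move=> j lt_s_j; rewrite /G binw_small ?mulr0 ?mul0r.
Qed.

Lemma sum_amp_step n t s (f : nat -> nat -> R) : (t + s <= 2 ^ n)%N ->
  \sum_(t' < (2 ^ n.+1).+1) \sum_(s' < (2 ^ n.+1).+1)
     (if (t <= t')%N && (s <= s')%N
      then amp_kernel p xi t s (t' - t) (s' - s) else 0) * f t' s' =
  cycle_E p xi t s f.
Proof.
move=> le_ts_2n; set N := (2 ^ n.+1).+1.
have le_2n_N : (2 * 2 ^ n < N)%N by rewrite /N expnS.
pose H a := \sum_(b < N - s) amp_kernel p xi t s a b * f (t + a)%N (s + b)%N.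
rewrite (eq_bigr (fun t' : 'I_N => if (t <= t')%N then H (t' - t)%N else 0)); last first.
  move=> t' _; case: (leqP t t') => [le_tt'|_] /=; last first.
    by rewrite big1 // => *; rewrite mul0r.
  rewrite /H -(@sum_ord_shift _ s N
    (fun b => amp_kernel p xi t s (t' - t) b * f (t + (t' - t))%N (s + b)%N)); last by lia.
  apply: eq_bigr => s' _; case: (leqP s s') => [le_ss'|_]; last by rewrite mul0r.
  by rewrite !subnKC.
rewrite sum_ord_shift; last by lia.
rewrite (sum_ord_trunc (m := t.+1) (F := H)); first last.
- move=> a lt_t_a; rewrite /H big1 // => b _.
  by rewrite amp_kernelE big1 ?mul0r // => i _; rewrite target_weight0 ?mul0r //; lia.
- by lia.
apply: eq_bigr => a _.
by rewrite /H (sum_amp_kernel _ (fun b => f (t + a)%N (s + b)%N)) //; lia.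
Qed.

Lemma amp_E_succ n f :
  amp_E p xi n.+1 f = amp_E p xi n (fun t s => cycle_E p xi t s f).
Proof.
rewrite /amp_E /=.
transitivity (\sum_(t < (2 ^ n).+1) \sum_(s < (2 ^ n).+1) amp_dist p xi n t s *
  \sum_(t' < (2 ^ n.+1).+1) \sum_(s' < (2 ^ n.+1).+1)
     (if (t <= t')%N && (s <= s')%N
      then amp_kernel p xi t s (t' - t) (s' - s) else 0) * f t' s').
  under eq_bigr do under eq_bigr do rewrite pair_bigA mulr_suml.
  under [RHS]eq_bigr do under eq_bigr do rewrite pair_bigA mulr_sumr.
  rewrite pair_bigA exchange_big [RHS]pair_bigA.
  by apply: eq_bigr => ts _; apply: eq_bigr => ts' _; rewrite mulrA.
apply: eq_bigr => t _; apply: eq_bigr => s _.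
have [le_ts_2n|lt_2n_ts] := leqP (t + s) (2 ^ n); first by rewrite sum_amp_step.
by rewrite amp_dist0 ?mul0r.
Qed.
End Chain.

Section Moments.
Variables (R : comNzRingType) (p xi : R).
Local Notation q := (p * (1 - xi)).
Local Notation r := (p * xi).
Implicit Types f g : nat -> nat -> R.

Lemma eq_amp_E n f g : f =2 g -> amp_E p xi n f = amp_E p xi n g.
Proof. by move=> fg; apply: eq_bigr => t _; apply: eq_bigr => s _; rewrite fg. Qed.

Lemma amp_ED n f g :
  amp_E p xi n (fun t s => f t s + g t s) = amp_E p xi n f + amp_E p xi n g.
Proof.
rewrite -big_split; apply: eq_bigr => t _.
by rewrite -big_split; apply: eq_bigr => s _; rewrite mulrDr.
Qed.

Lemma amp_EB n f g :
  amp_E p xi n (fun t s => f t s - g t s) = amp_E p xi n f - amp_E p xi n g.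
Proof.
rewrite -sumrB; apply: eq_bigr => t _.
by rewrite -sumrB; apply: eq_bigr => s _; rewrite mulrBr.
Qed.

Lemma amp_EZ n c f : amp_E p xi n (fun t s => c * f t s) = c * amp_E p xi n f.
Proof.
rewrite mulr_sumr; apply: eq_bigr => t _.
by rewrite mulr_sumr; apply: eq_bigr => s _; rewrite mulrCA.
Qed.

Lemma amp_E0 f : amp_E p xi 0 f = f 1%N 0%N.
Proof. by rewrite /amp_E /= !big_ord_recr !big_ord0 /=; ring. Qed.

Definition amp_ET2 n := amp_E p xi n (fun t _ => t%:R ^+ 2).

Lemma amp_ET_succ n : amp_ET p xi n.+1 = (1 + q) * amp_ET p xi n.
Proof. by rewrite /amp_ET amp_E_succ (eq_amp_E _ (cycle_E_T p xi)) amp_EZ. Qed.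

Lemma amp_ES_succ n :
  amp_ES p xi n.+1 = (1 + p) * amp_ES p xi n + r * amp_ET p xi n.
Proof. by rewrite /amp_ES amp_E_succ (eq_amp_E _ (cycle_E_S p xi)) amp_ED !amp_EZ. Qed.

Lemma amp_ET2_succ n :
  amp_ET2 n.+1 = (1 + q) ^+ 2 * amp_ET2 n + q * (1 - q) * amp_ET p xi n.
Proof.
by rewrite /amp_ET2 amp_E_succ (eq_amp_E _ (cycle_E_T2 p xi)) amp_ED !amp_EZ.
Qed.

Lemma amp_ETS_succ n : amp_ETS p xi n.+1 =
  (1 + p) * (1 + q) * amp_ETS p xi n + r * (1 + q) * amp_ET2 n - q * r * amp_ET p xi n.
Proof.
by rewrite /amp_ETS amp_E_succ (eq_amp_E _ (cycle_E_TS p xi)) amp_EB amp_ED !amp_EZ.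
Qed.

Lemma amp_ETE n : amp_ET p xi n = (1 + q) ^+ n.
Proof.
elim: n => [|n IHn]; first by rewrite /amp_ET amp_E0.
by rewrite amp_ET_succ IHn exprS.
Qed.

Lemma amp_ESE n : amp_ES p xi n = (1 + p) ^+ n - (1 + q) ^+ n.
Proof.
elim: n => [|n IHn]; first by rewrite /amp_ES amp_E0 !expr0 subrr.
by rewrite amp_ES_succ IHn amp_ETE !exprS; ring.
Qed.
End Moments.

Section ClosedForms.
Variables (F : fieldType) (p xi : F).
Local Notation q := (p * (1 - xi)).
Hypothesis q_neq : 1 + q != 0.

Lemma amp_ET2E n : amp_ET2 p xi n =
  (1 + q) ^+ n * (1 + q) ^+ n + (1 - q) / (1 + q) * (1 + q) ^+ n * ((1 + q) ^+ n - 1).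
Proof.
elim: n => [|n IHn]; first by rewrite /amp_ET2 amp_E0 !expr0; field.
by rewrite amp_ET2_succ IHn amp_ETE !exprS; field.
Qed.

Lemma amp_ETSE n : amp_ETS p xi n = (1 + q) ^+ n / (1 + q) *
  (xi * (1 - (1 + p) ^+ n) + 2 * ((1 + p) ^+ n - (1 + q) ^+ n)).
Proof.
elim: n => [|n IHn]; first by rewrite /amp_ETS amp_E0 !expr0; field.
by rewrite amp_ETS_succ IHn amp_ET2E amp_ETE !exprS; field.
Qed.
End ClosedForms.

Theorem mainTheorem1 (R : realFieldType) (p xi : R) (n : nat)
  (hp0 : 0 <= p) (hp1 : p <= 1) (hxi0 : 0 <= xi) (hxi1 : xi <= 1) :
  let q := p * (1 - xi) in
  [/\ amp_ET p xi n = (1 + q) ^+ n,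
      amp_ES p xi n = (1 + p) ^+ n - (1 + q) ^+ n,
      amp_VarT p xi n = (1 - q) / (1 + q) * (1 + q) ^+ n * ((1 + q) ^+ n - 1),
      amp_ETS p xi n = (1 + q) ^+ n / (1 + q) *
        (xi * (1 - (1 + p) ^+ n) + 2 * ((1 + p) ^+ n - (1 + q) ^+ n))
    & amp_CovTS p xi n = (1 + q) ^+ n / (1 + q) *
        ((1 - q) * ((1 + p) ^+ n - (1 + q) ^+ n) - xi * ((1 + p) ^+ n - 1))].
Proof.
move=> q; rewrite {}/q.
have q_neq : 1 + p * (1 - xi) != 0.
  by rewrite gt_eqF // ltr_wpDr // mulr_ge0 // subr_ge0.
split; [exact: amp_ETE | exact: amp_ESE | | exact: amp_ETSE |].
- by rewrite /amp_VarT -/(amp_ET2 p xi n) amp_ET2E // amp_ETE; field.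
- by rewrite /amp_CovTS amp_ETSE // amp_ETE amp_ESE; field.
Qed.
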